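(* Let $\mathsf H$ be a Hilbert space. Every $2\times2$ submagic matrix with entries projections on $\mathsf H$ can be completed to a $4\times4$ magic matrix of projections on $\mathsf H$ (i.e. one whose upper-left $2\times2$ block is the given matrix). However, there exist $2\times2$ submagic matrices that cannot be completed to a $3\times3$ magic matrix.
   Context: A submagic matrix is a square matrix whose entries are orthogonal projections, pairwise orthogonal within each row and within each column; it is magic if in addition the entries of each row and each column sum to $1$. *)

From mathcomp Require Import all_boot all_order all_algebra.
From mathcomp Require Import complex.
From mathcomp Require Import reals.
Set Implicit Arguments. Unset Strict Implicit. Unset Printing Implicit Defensive.
Import Order.TTheory GRing.Theory Num.Theory.
Local Open Scope ring_scope.

Section Hilbert.
Variables (R : realType) (V : lmodType R[i]).

Definition inner_product (ip : V -> V -> R[i]) : Prop :=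
  [/\ (forall (a : R[i]) (x y z : V), ip (a *: x + y) z = a * ip x z + ip y z),
      (forall x y : V, ip y x = (ip x y)^*),
      (forall x : V, 0 <= ip x x) &
      (forall x : V, ip x x = 0 -> x = 0)].

(* Completeness of V for the norm ||x|| = sqrt <x,x>, phrased with squared
   norms: every Cauchy sequence converges. *)
Definition ip_complete (ip : V -> V -> R[i]) : Prop :=
  forall u : nat -> V,
    (forall e : R[i], 0 < e -> exists N : nat, forall m n : nat,
        (N <= m)%N -> (N <= n)%N -> ip (u m - u n) (u m - u n) < e) ->
    exists l : V, forall e : R[i], 0 < e -> exists N : nat, forall n : nat,
        (N <= n)%N -> ip (u n - l) (u n - l) < e.

Definition hilbert_space (ip : V -> V -> R[i]) : Prop :=
  inner_product ip /\ ip_complete ip.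

Definition orth_projection (ip : V -> V -> R[i]) (P : V -> V) : Prop :=
  [/\ (forall (a : R[i]) (x y : V), P (a *: x + y) = a *: P x + P y),
      (forall x : V, P (P x) = P x) &
      (forall x y : V, ip (P x) y = ip x (P y))].

Definition submagic (ip : V -> V -> R[i]) (n : nat)
    (Q : 'I_n -> 'I_n -> V -> V) : Prop :=
  [/\ (forall i j, orth_projection ip (Q i j)),
      (forall i j k, j != k -> forall x, Q i j (Q i k x) = 0) &
      (forall i j k, i != k -> forall x, Q i j (Q k j x) = 0)].

Definition magic (ip : V -> V -> R[i]) (n : nat)
    (Q : 'I_n -> 'I_n -> V -> V) : Prop :=
  [/\ submagic ip Q,
      (forall i x, \sum_(j < n) Q i j x = x) &
      (forall j x, \sum_(i < n) Q i j x = x)].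

Definition completes (ip : V -> V -> R[i]) (n m : nat) (Hnm : (n <= m)%N)
    (P : 'I_n -> 'I_n -> V -> V) (Q : 'I_m -> 'I_m -> V -> V) : Prop :=
  magic ip Q /\
  forall (i j : 'I_n) (x : V), Q (widen_ord Hnm i) (widen_ord Hnm j) x = P i j x.

End Hilbert.

From mathcomp Require Import all_boot all_order all_algebra.
From mathcomp Require Import complex.
From mathcomp Require Import reals.
Import Order.TTheory GRing.Theory Num.Theory.
Local Open Scope ring_scope.

Set Implicit Arguments. Unset Strict Implicit. Unset Printing Implicit Defensive.

(* Completion: if P is an n x n submagic matrix with row defects r_i = 1 - sum_j P_ij
   and column defects c_j = 1 - sum_i P_ij, then the block matrix
   [[P, diag r], [diag c, P^T]] is magic.  Every row and column of it consists of a
   row or column of P, which is a family of pairwise orthogonal projections, together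
   with that family's defect, which is again a projection orthogonal to the family,
   padded with zeros.
   Obstruction: a 3 x 3 magic matrix Q whose upper-left 2 x 2 block is zero has
   Q_02 = Q_12 = 1 by the row sums, while these two entries are orthogonal by the
   column condition; so the space is zero. *)

Section LinearFor.
Variables (R : pzRingType) (U : lmodType R) (W : zmodType) (s : GRing.Scale.law R W).
Variable f : U -> W.
Hypothesis f_linear : GRing.linear_for s f.

Lemma linear_forB : {morph f : x y / x - y}.
Proof. exact: GRing.zmod_morphism_linear. Qed.

Lemma linear_for0 : f 0 = 0.
Proof. by rewrite -[in f _](subrr 0) linear_forB subrr. Qed.

Lemma linear_for_sum (I : Type) (r : seq I) (P : pred I) (F : I -> U) :
  f (\sum_(i <- r | P i) F i) = \sum_(i <- r | P i) f (F i).
Proof. exact: (big_morph f (GRing.semilinear_linear f_linear).2 linear_for0). Qed.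

End LinearFor.

Section Concat.
Variables (T : Type) (m n : nat) (F : 'I_m -> T) (G : 'I_n -> T).

Definition concat (k : 'I_(m + n)) : T :=
  match split k with inl i => F i | inr j => G j end.

Lemma concat_lshift i : concat (lshift n i) = F i.
Proof. by rewrite /concat (unsplitK (inl _ i)). Qed.

Lemma concat_rshift j : concat (rshift m j) = G j.
Proof. by rewrite /concat (unsplitK (inr _ j)). Qed.

End Concat.

Section OrthogonalFamilies.
Variables (R : realType) (V : lmodType R[i]) (ip : V -> V -> R[i]).
Hypothesis ip_inner : inner_product ip.

Lemma ip_scalar_l z : scalar (ip^~ z).
Proof. by case: ip_inner => ipD _ _ _ a x y; exact: ipD. Qed.

Lemma ip_conj x y : ip x y = (ip y x)^*.
Proof. by case: ip_inner => _ ipC _ _; rewrite ipC. Qed.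

Lemma ip_subl x y z : ip (x - y) z = ip x z - ip y z.
Proof. exact: (linear_forB (ip_scalar_l z)). Qed.

Lemma ip_subr x y z : ip z (x - y) = ip z x - ip z y.
Proof. by rewrite !(ip_conj z) ip_subl rmorphB. Qed.

Lemma ip_suml (I : finType) (F : I -> V) z : ip (\sum_i F i) z = \sum_i ip (F i) z.
Proof. exact: (linear_for_sum (ip_scalar_l z)). Qed.

Lemma ip_sumr (I : finType) (F : I -> V) z : ip z (\sum_i F i) = \sum_i ip z (F i).
Proof.
by rewrite ip_conj ip_suml rmorph_sum; apply: eq_bigr => i _; rewrite [RHS]ip_conj.
Qed.

Lemma ip0l z : ip 0 z = 0.
Proof. exact: (linear_for0 (ip_scalar_l z)). Qed.

Lemma ip0r z : ip z 0 = 0.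
Proof. by rewrite ip_conj ip0l rmorph0. Qed.

Lemma orth_projection0 : orth_projection ip (fun=> 0).
Proof. by split=> [a x y|x|x y]; rewrite ?scaler0 ?addr0 ?ip0l ?ip0r. Qed.

Lemma orth_projection_ext (p q : V -> V) :
  p =1 q -> orth_projection ip p -> orth_projection ip q.
Proof.
by move=> pq [plin pid psa]; split=> [a x y|x|x y]; rewrite -!pq ?plin ?pid ?psa.
Qed.

Lemma submagic0 n : submagic ip (fun (_ _ : 'I_n) (_ : V) => 0 : V).
Proof. by split=> // i j; exact: orth_projection0. Qed.

Definition orthogonal_family (I : finType) (F : I -> V -> V) :=
  (forall i, orth_projection ip (F i)) /\ (forall i j, i != j -> forall x, F i (F j x) = 0).

Definition partition_of_unity (I : finType) (F : I -> V -> V) :=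
  orthogonal_family F /\ forall x, \sum_i F i x = x.

Definition compl_sum (I : finType) (F : I -> V -> V) (x : V) : V := x - \sum_i F i x.

Lemma orthogonal_family_compl (I : finType) (F : I -> V -> V) :
  orthogonal_family F ->
  [/\ orth_projection ip (compl_sum F),
      forall i x, F i (compl_sum F x) = 0 & forall i x, compl_sum F (F i x) = 0].
Proof.
move=> [Fproj Forth].
have Flin i : linear (F i) by case: (Fproj i).
have Fid i x : F i (F i x) = F i x by case: (Fproj i).
have F_sum k x : F k (\sum_i F i x) = F k x.
  rewrite (linear_for_sum (Flin k)) (bigD1 k) //= Fid big1 ?addr0 // => i ik.
  by apply: Forth; rewrite eq_sym.
have sum_F k x : \sum_i F i (F k x) = F k x.
  by rewrite (bigD1 k) //= Fid big1 ?addr0 // => i ik; apply: Forth.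
have F_compl i x : F i (compl_sum F x) = 0 by rewrite (linear_forB (Flin i)) F_sum subrr.
have compl_F i x : compl_sum F (F i x) = 0 by rewrite /compl_sum sum_F subrr.
split=> //; split=> [a x y|x|x y].
- rewrite /compl_sum.
  under eq_bigr => i _ do rewrite Flin.
  by rewrite big_split /= -scaler_sumr scalerBr opprD addrACA.
- by rewrite {1}/compl_sum big1 ?subr0.
- rewrite /compl_sum ip_subl ip_subr ip_suml ip_sumr; congr (_ - _).
  by apply: eq_bigr => i _; case: (Fproj i).
Qed.

Lemma partition_of_unity_ext (I : finType) (F G : I -> V -> V) :
  (forall i x, F i x = G i x) -> partition_of_unity F -> partition_of_unity G.
Proof.
move=> FG [[Fproj Forth] Fsum]; split; first split.
- by move=> i; apply: orth_projection_ext (Fproj i).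
- by move=> i j ij x; rewrite -!FG Forth.
- by move=> x; rewrite -[RHS]Fsum; apply: eq_bigr => i _; rewrite FG.
Qed.

Lemma orthogonal_family_single (I : finType) (D : I -> V -> V) (i0 : I) :
  orth_projection ip (D i0) -> (forall i, i != i0 -> forall x, D i x = 0) ->
  orthogonal_family D /\ forall x, \sum_i D i x = D i0 x.
Proof.
move=> Dproj D0; have [Dlin _ _] := Dproj.
split; last by move=> x; rewrite (bigD1 i0) //= big1 ?addr0 // => i /D0->.
split=> [i|i j ij x].
  have [-> // | /D0 Di0] := eqVneq i i0.
  by apply: orth_projection_ext orth_projection0 => x; rewrite Di0.
case: (eqVneq i i0) ij => [-> i0j | /D0 -> //].
by rewrite (D0 j) ?(linear_for0 Dlin) // eq_sym.
Qed.

Lemma partition_of_unity_concat m n (F : 'I_m -> V -> V) (G : 'I_n -> V -> V) :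
  orthogonal_family F -> orthogonal_family G ->
  (forall i j x, F i (G j x) = 0) -> (forall i j x, G j (F i x) = 0) ->
  (forall x, \sum_i F i x + \sum_j G j x = x) ->
  partition_of_unity (concat F G).
Proof.
move=> [Fproj Forth] [Gproj Gorth] FG GF FGsum; split; last first.
  move=> x; rewrite -[RHS]FGsum big_split_ord; congr (_ + _).
    by apply: eq_bigr => i _; rewrite concat_lshift.
  by apply: eq_bigr => j _; rewrite concat_rshift.
split=> [k|k l + x]; rewrite -[k]splitK.
  by rewrite /concat unsplitK; case: (split k).
rewrite -[l]splitK (inj_eq (can_inj unsplitK)) /concat !unsplitK.
case: (split k) (split l) => [i|j] [i'|j'] /= kl.
- exact: Forth.
- exact: FG.
- exact: GF.
- exact: Gorth.
Qed.

Lemma partition_of_unity_compl_concat m n (F : 'I_m -> V -> V) (G : 'I_n -> V -> V) j0 :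
  orthogonal_family F -> (forall x, G j0 x = compl_sum F x) ->
  (forall j, j != j0 -> forall x, G j x = 0) ->
  partition_of_unity (concat F G) /\ partition_of_unity (concat G F).
Proof.
move=> Forth Gj0 G0; have [Fproj _] := Forth.
have [complP F_compl compl_F] := orthogonal_family_compl Forth.
have [Gorth Gsum] : orthogonal_family G /\ forall x, \sum_j G j x = G j0 x.
  by apply: orthogonal_family_single G0; apply: orth_projection_ext complP.
have FG i j x : F i (G j x) = 0.
  have [-> | /G0 ->] := eqVneq j j0; first by rewrite Gj0 F_compl.
  by have [Flin _ _] := Fproj i; apply: linear_for0 Flin.
have GF i j x : G j (F i x) = 0.
  by have [-> | /G0 -> //] := eqVneq j j0; rewrite Gj0 compl_F.
have FGsum x : \sum_i F i x + \sum_j G j x = x by rewrite Gsum Gj0 addrC subrK.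
split; first exact: partition_of_unity_concat.
by apply: partition_of_unity_concat => // x; rewrite addrC.
Qed.
End OrthogonalFamilies.

Section Doubling.
Variables (R : realType) (V : lmodType R[i]) (ip : V -> V -> R[i]).
Hypothesis ip_inner : inner_product ip.

Lemma magic_of_partitions n (Q : 'I_n -> 'I_n -> V -> V) :
  (forall i, partition_of_unity ip (Q i)) ->
  (forall j, partition_of_unity ip (Q^~ j)) -> magic ip Q.
Proof.
move=> rows cols; split; first split.
- by move=> i j; have [[]] := rows i.
- by move=> i j k jk x; have [[_ ->]] := rows i.
- by move=> i j k ik x; have [[_ ->]] := cols j.
- by move=> i x; have [_ ->] := rows i.
- by move=> j x; have [_ ->] := cols j.
Qed.

Variable n : nat.
Implicit Type P : 'I_n -> 'I_n -> V -> V.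

Definition doubled P : 'I_(n + n) -> 'I_(n + n) -> V -> V :=
  concat (fun i => concat (P i) (fun j => if j == i then compl_sum (P i) else fun=> 0))
         (fun j => concat (fun i => if i == j then compl_sum (P^~ j) else fun=> 0) (P^~ j)).

Lemma magic_doubled P : submagic ip P -> magic ip (doubled P).
Proof.
move=> [Pproj Prow Pcol].
have row_orth i : orthogonal_family ip (P i) by split=> // j k; apply: Prow.
have col_orth j : orthogonal_family ip (P^~ j) by split=> // i k; apply: Pcol.
apply: magic_of_partitions => k; rewrite -[k]splitK; case: (split k) => {k} i /=.
- rewrite /doubled concat_lshift.
  apply: (proj1 (partition_of_unity_compl_concat ip_inner (j0 := i) (row_orth i) _ _)).
    by move=> x; rewrite eqxx.
  by move=> j /negbTE ->.
- rewrite /doubled concat_rshift.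
  apply: (proj2 (partition_of_unity_compl_concat ip_inner (j0 := i) (col_orth i) _ _)).
    by move=> x; rewrite eqxx.
  by move=> j /negbTE ->.
- pose G j : V -> V := if i == j then compl_sum (P^~ j) else fun=> 0.
  apply: (partition_of_unity_ext (F := concat (P^~ i) G)).
    move=> k x; rewrite -[k]splitK /doubled.
    by case: (split k) => j /=; rewrite !(concat_lshift, concat_rshift).
  apply: (proj1 (partition_of_unity_compl_concat ip_inner (j0 := i) (col_orth i) _ _)).
    by move=> x; rewrite /G eqxx.
  by move=> j; rewrite /G eq_sym => /negbTE ->.
- pose G j : V -> V := if i == j then compl_sum (P j) else fun=> 0.
  apply: (partition_of_unity_ext (F := concat G (P i))).
    move=> k x; rewrite -[k]splitK /doubled.
    by case: (split k) => j /=; rewrite !(concat_lshift, concat_rshift).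
  apply: (proj2 (partition_of_unity_compl_concat ip_inner (j0 := i) (row_orth i) _ _)).
    by move=> x; rewrite /G eqxx.
  by move=> j; rewrite /G eq_sym => /negbTE ->.
Qed.

Lemma completes_doubled P (H : (n <= n + n)%N) : submagic ip P -> completes ip H P (doubled P).
Proof.
move=> Psub; split; first exact: magic_doubled.
have widenE k : widen_ord H k = lshift n k by apply: val_inj.
by move=> i j x; rewrite !widenE /doubled !concat_lshift.
Qed.
End Doubling.

Section NoCompletion.
Variables (R : realType) (V : lmodType R[i]) (ip : V -> V -> R[i]).

Lemma magic_row_single n (Q : 'I_n -> 'I_n -> V -> V) i j :
  magic ip Q -> (forall k, k != j -> forall x, Q i k x = 0) -> forall x, Q i j x = x.
Proof.
by move=> [_ rowsum _] Q0 x; rewrite -[RHS](rowsum i) (bigD1 j) //= big1 ?addr0 // => k /Q0.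
Qed.

Lemma zero_not_completable (H23 : (2 <= 3)%N) :
  (exists v : V, v != 0) ->
  ~ exists Q : 'I_3 -> 'I_3 -> V -> V, completes ip H23 (fun _ _ => fun=> 0) Q.
Proof.
move=> [v /negP v0] [Q [Qmagic Qblock]]; apply: v0.
have last_col (i : 'I_2) : Q (widen_ord H23 i) ord_max v = v.
  apply: magic_row_single Qmagic _ v => k k_max x.
  have k_small : (k < 2)%N by move: k_max; rewrite -val_eqE /=; case: k => [[|[|[]]]].
  by rewrite (_ : k = widen_ord H23 (Ordinal k_small)) ?Qblock //; apply: val_inj.
have [[_ _ Qcol] _ _] := Qmagic.
by rewrite -(last_col ord0) -{1}(last_col ord_max) Qcol.
Qed.
End NoCompletion.

Theorem proposition3p5 (R : realType) (V : lmodType R[i]) (ip : V -> V -> R[i])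
    (HV : hilbert_space ip) :
  (forall P : 'I_2 -> 'I_2 -> V -> V, submagic ip P ->
     exists Q : 'I_4 -> 'I_4 -> V -> V, completes ip (isT : (2 <= 4)%N) P Q)
  /\
  ((exists v : V, v != 0) ->
     exists P : 'I_2 -> 'I_2 -> V -> V, submagic ip P /\
       ~ exists Q : 'I_3 -> 'I_3 -> V -> V, completes ip (isT : (2 <= 3)%N) P Q).
Proof.
have [ip_inner _] := HV.
split=> [P Psub | V_nontrivial].
- by exists (doubled P); apply: completes_doubled.
- exists (fun _ _ => fun=> 0); split; first exact: submagic0.
  exact: zero_not_completable V_nontrivial.
Qed.
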